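(* Let $\ell$ be divisible by $4$, $\lambda\in\mathbb{F}_q^*$, and let $\mathcal{Z}=(Z,Z')$ be a perfect colored matching (for $r=2$). Then the family $\{(A_Z(\lambda),S_Z),(A_{Z'}(\lambda),S_{Z'})\}$ satisfies the subspace condition with $r=2$.
   Context: Vectors are row vectors and matrices act on the right ($SM=\{sM:s\in S\}$). Subspace condition for $r,\ell$ ($r\mid\ell$): a family $\{(A_i,S_i)\}_{i=1}^k$ of invertible $\ell\times\ell$ matrices and $(\ell/r)$-dimensional subspaces satisfies it if (i) $S_i+S_iA_i+\dots+S_iA_i^{r-1}=\mathbb{F}_q^\ell$ for all $i$; (ii) $S_iA_j=S_i$ for all $i\ne j$; (iii) every square block submatrix of the $k\times r$ block matrix with $(i,j)$ block $A_i^j$ ($j=0,\dots,r-1$) is invertible. A perfect colored matching for $r=2$ is a pair $\mathcal{Z}=(Z,Z')$ of ordered sequences $Z=(z_0,\dots,z_{\ell/2-1})$, $Z'=(z'_0,\dots,z'_{\ell/2-1})$ of standard unit vectors of $\mathbb{F}_q^\ell$ whose underlying sets partition $\{e_0,\dots,e_{\ell-1}\}$; its edges are $\{z_i,z'_i\}$. $A(\lambda)=\mathrm{diag}(A^+(\lambda),-A^+(\lambda))$, where $A^+(\lambda)$ is the $(\ell/2)\times(\ell/2)$ block diagonal matrix with all $2\times 2$ blocks $\begin{pmatrix}0&\lambda\\ \lambda&0\end{pmatrix}$. $P_Z$ is the $\ell\times\ell$ matrix with rows $z_0,\,z'_0-z_0,\,z_1,\,z'_1-z_1,\dots,z_{\ell/2-1},\,z'_{\ell/2-1}-z_{\ell/2-1}$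 (in this order), and $P_{Z'}$ has rows $z'_0,\,z_0+z'_0,\,z'_1,\,z_1+z'_1,\dots,z'_{\ell/2-1},\,z_{\ell/2-1}+z'_{\ell/2-1}$. Define $A_Z(\lambda)=P_Z^{-1}A(\lambda)P_Z$, $A_{Z'}(\lambda)=P_{Z'}^{-1}A(\lambda)P_{Z'}$, $S_Z=\mathrm{span}\{z_i\}$, $S_{Z'}=\mathrm{span}\{z'_i\}$. *)

From HB Require Import structures.
From mathcomp Require Import all_boot all_order all_algebra.
Set Implicit Arguments. Unset Strict Implicit. Unset Printing Implicit Defensive.
Import GRing.Theory.
Local Open Scope ring_scope.

(* Row vectors, matrices act on the right; a subspace of F^l is represented
   as the row space of a matrix (mxalgebra conventions, scope %MS). *)

Definition subspace_condition (F : fieldType) (k r l : nat)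
    (A : 'I_k -> 'M[F]_l) (S : 'I_k -> 'M[F]_l) : Prop :=
  [/\ (forall i, A i \in unitmx),
      (forall i, \rank (S i) = (l %/ r)%N),
      (forall i, ((\sum_(j < r) (S i *m A i ^+ j)) == 1%:M)%MS),
      (forall i j, i != j -> (S i *m A j == S i)%MS) &
  (* (iii) every square block submatrix of the k x r block matrix
     with (i,j) block A_i^j is invertible: choose t block rows
     f 0 < ... < f (t-1) and t block columns g 0 < ... < g (t-1). *)
      (forall (t : nat) (f : 'I_t -> 'I_k) (g : 'I_t -> 'I_r),
          {homo f : x y / (x < y)%N} -> {homo g : x y / (x < y)%N} ->
          \mxblock_(a < t, b < t) (A (f a) ^+ (g b)) \in unitmx)].

Definition unitv (F : fieldType) (l : nat) (i : 'I_l) : 'rV[F]_l := delta_mx 0 i.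

(* Perfect colored matching for r = 2: two sequences of unit vectors
   (given by their indices) of length l/2 whose underlying sets partition
   {e_0, ..., e_(l-1)}. *)
Definition perfect_colored_matching (l : nat) (z z' : seq 'I_l) : Prop :=
  [/\ size z = l./2, size z' = l./2,
      [disjoint z & z'] & forall i : 'I_l, (i \in z) || (i \in z')].

(* A^+(lambda): m x m block diagonal with 2x2 blocks [[0, lam],[lam, 0]]
   (blocks on index pairs {2t, 2t+1}); entry formula. *)
Definition Aplus_entry (F : fieldType) (lam : F) (i j : nat) : F :=
  if (i./2 == j./2) && (i != j) then lam else 0.

Definition Aplus (F : fieldType) (m : nat) (lam : F) : 'M[F]_m :=
  \matrix_(i < m, j < m) Aplus_entry lam i j.

Definition Amat (F : fieldType) (l : nat) (lam : F) : 'M[F]_l :=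
  \matrix_(i < l, j < l)
    if ((i < l./2) && (j < l./2))%N then Aplus_entry lam i j
    else if ((l./2 <= i) && (l./2 <= j))%N then - Aplus_entry lam (i - l./2) (j - l./2)
    else 0.

Definition PZ (F : fieldType) (l : nat) (z z' : seq 'I_l) : 'M[F]_l :=
  \matrix_(r < l)
    (if odd r then (map (@unitv F l) z')`_(r./2) - (map (@unitv F l) z)`_(r./2)
     else (map (@unitv F l) z)`_(r./2)).

Definition PZ' (F : fieldType) (l : nat) (z z' : seq 'I_l) : 'M[F]_l :=
  \matrix_(r < l)
    (if odd r then (map (@unitv F l) z)`_(r./2) + (map (@unitv F l) z')`_(r./2)
     else (map (@unitv F l) z')`_(r./2)).

Definition AZ (F : fieldType) (l : nat) (lam : F) (z z' : seq 'I_l) : 'M[F]_l :=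
  invmx (@PZ F l z z') *m Amat l lam *m @PZ F l z z'.

Definition AZ' (F : fieldType) (l : nat) (lam : F) (z z' : seq 'I_l) : 'M[F]_l :=
  invmx (@PZ' F l z z') *m Amat l lam *m @PZ' F l z z'.

(* S for a sequence of indices: the subspace span{e_i : i in s}, as the row
   space of the l x l matrix whose rows are the e_(s_i) (padded with 0). *)
Definition Sspan (F : fieldType) (l : nat) (s : seq 'I_l) : 'M[F]_l :=
  \matrix_(i < l) (map (@unitv F l) s)`_i.

Definition fam2 (T : Type) (x y : T) (i : 'I_2) : T :=
  if val i == 0%N then x else y.

(* [A(lam)] swaps [e_(2i)] and [e_(2i+1)] up to a factor [c_i = +-lam].  After the
   changes of basis, [A_Z] maps [z_i |-> c_i (z'_i - z_i)] and [z'_i |-> c_i z'_i],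
   while [A_Z'] maps [z'_i |-> c_i (z_i + z'_i)] and [z_i |-> - c_i z_i].  Since the
   [z_i, z'_i] form a basis, everything is checked on it: [S_Z + S_Z A_Z] and
   [S_Z' + S_Z' A_Z'] contain every basis vector, [S_Z] is an eigenspace of [A_Z'] and
   [S_Z'] one of [A_Z], and [A_Z' - A_Z] maps [z_i |-> - c_i z'_i], [z'_i |-> c_i z_i],
   so it is invertible, which is exactly what the block matrix [[1, A_Z], [1, A_Z']]
   needs. *)

From HB Require Import structures.
From mathcomp Require Import all_boot all_order all_algebra.
From mathcomp Require Import zify.
Set Implicit Arguments. Unset Strict Implicit. Unset Printing Implicit Defensive.
Import GRing.Theory.
Local Open Scope ring_scope.

Definition Amat_coef (F : fieldType) (l : nat) (lam : F) (i : nat) : F :=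
  if (i.*2 < l./2)%N then lam else - lam.

Definition unitv_at (F : fieldType) (l : nat) (s : seq 'I_l) (i : nat) : 'rV[F]_l :=
  (map (@unitv F l) s)`_i.

Lemma Amat_coef_neq0 (F : fieldType) (l : nat) (lam : F) i :
  lam != 0 -> Amat_coef l lam i != 0.
Proof. by rewrite /Amat_coef; case: ifP; rewrite ?oppr_eq0. Qed.

Section AmatRows.

Variables (F : fieldType) (l : nat) (lam : F) (i : nat).
Hypotheses (l4 : (4 %| l)%N) (Hi0 : (i.*2 < l)%N) (Hi1 : (i.*2.+1 < l)%N).

(* Because [4 %| l], rows [2i] and [2i+1] lie in the same half of [A(lam)]. *)
Lemma row_Amat_even :
  row (Ordinal Hi0) (Amat l lam) = Amat_coef l lam i *: delta_mx 0 (Ordinal Hi1).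
Proof.
apply/rowP => j; rewrite !mxE /Aplus_entry /Amat_coef /=.
have -> : (j == Ordinal Hi1) = (nat_of_ord j == i.*2.+1) by [].
repeat (case: ifP => ?); case: eqP => ?; rewrite /= ?mulr1 ?mulr0 ?oppr0 //; lia.
Qed.

Lemma row_Amat_odd :
  row (Ordinal Hi1) (Amat l lam) = Amat_coef l lam i *: delta_mx 0 (Ordinal Hi0).
Proof.
apply/rowP => j; rewrite !mxE /Aplus_entry /Amat_coef /=.
have -> : (j == Ordinal Hi0) = (nat_of_ord j == i.*2) by [].
repeat (case: ifP => ?); case: eqP => ?; rewrite /= ?mulr1 ?mulr0 ?oppr0 //; lia.
Qed.

Lemma row_conj_Amat (P : 'M[F]_l) :
  P \in unitmx ->
  row (Ordinal Hi0) P *m (invmx P *m Amat l lam *m P)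
    = Amat_coef l lam i *: row (Ordinal Hi1) P /\
  row (Ordinal Hi1) P *m (invmx P *m Amat l lam *m P)
    = Amat_coef l lam i *: row (Ordinal Hi0) P.
Proof.
move=> Pu; rewrite -!row_mul !mulmxA mulmxV // mul1mx !row_mul.
by rewrite row_Amat_even row_Amat_odd -!scalemxAl -!rowE.
Qed.

Lemma row_PZ_even (z z' : seq 'I_l) :
  row (Ordinal Hi0) (PZ F z z') = unitv_at F z i.
Proof. by rewrite rowK /= odd_double doubleK. Qed.

Lemma row_PZ_odd (z z' : seq 'I_l) :
  row (Ordinal Hi1) (PZ F z z') = unitv_at F z' i - unitv_at F z i.
Proof. by rewrite rowK /= odd_double uphalf_double. Qed.

Lemma row_PZ'_even (z z' : seq 'I_l) :
  row (Ordinal Hi0) (PZ' F z z') = unitv_at F z' i.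
Proof. by rewrite rowK /= odd_double doubleK. Qed.

Lemma row_PZ'_odd (z z' : seq 'I_l) :
  row (Ordinal Hi1) (PZ' F z z') = unitv_at F z i + unitv_at F z' i.
Proof. by rewrite rowK /= odd_double uphalf_double. Qed.

End AmatRows.

Lemma unitv_at_default (F : fieldType) (l : nat) (s : seq 'I_l) i :
  (size s <= i)%N -> unitv_at F s i = 0.
Proof. by move=> Hi; rewrite /unitv_at nth_default // size_map. Qed.

Lemma unitv_at_index (F : fieldType) (l : nat) (s : seq 'I_l) (k : 'I_l) :
  k \in s -> unitv_at F s (index k s) = delta_mx 0 k.
Proof. by move=> Hk; rewrite /unitv_at (nth_map k) ?index_mem // nth_index. Qed.

Lemma row_Sspan (F : fieldType) (l : nat) (s : seq 'I_l) (k : 'I_l) :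
  row k (Sspan F s) = unitv_at F s k.
Proof. exact: rowK. Qed.

Lemma Sspan_rank_le (F : fieldType) (l : nat) (s : seq 'I_l) :
  (size s <= l)%N -> (\rank (Sspan F s) <= size s)%N.
Proof.
move=> Hs; have -> : Sspan F s = pid_mx (size s) *m Sspan F s.
  apply/row_matrixP => k; rewrite row_mul row_Sspan.
  have -> : row k (pid_mx (size s) : 'M[F]_l)
      = if (k < size s)%N then delta_mx 0 k else 0.
    by apply/rowP => j; rewrite !mxE; case: ifP => Hk; rewrite ?mxE eq_sym ?andbT ?andbF.
  have [Hk|Hk] := ltnP k (size s); first by rewrite -rowE row_Sspan.
  by rewrite mul0mx unitv_at_default.
by rewrite (leq_trans (mxrankM_maxl _ _)) // rank_pid_mx.
Qed.

Lemma Sspan_sub (F : fieldType) (l : nat) (s : seq 'I_l) i :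
  (i < l)%N -> (unitv_at F s i <= Sspan F s)%MS.
Proof. by move=> Hi; rewrite -[i]/(nat_of_ord (Ordinal Hi)) -row_Sspan row_sub. Qed.

Lemma Sspan_mulmx_sub (F : fieldType) (l : nat) (s : seq 'I_l) (A : 'M[F]_l)
    (c : nat -> F) :
  (forall i, (i < size s)%N -> unitv_at F s i *m A = c i *: unitv_at F s i) ->
  (Sspan F s *m A <= Sspan F s)%MS.
Proof.
move=> HA; apply/row_subP => k; rewrite row_mul row_Sspan.
have [Hk|Hk] := ltnP k (size s); last by rewrite unitv_at_default ?mul0mx ?sub0mx.
by rewrite HA // scalemx_sub // Sspan_sub.
Qed.

Lemma eqmx_mul_unit (F : fieldType) (l : nat) (S A : 'M[F]_l) :
  A \in unitmx -> (S *m A <= S)%MS -> (S *m A == S)%MS.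
Proof.
move=> Au sSA; rewrite -(mxrank_leqif_eq sSA).2.
by rewrite mxrankMfree ?row_free_unit.
Qed.

Lemma mxblock_unit_of_rinv (F : fieldType) (t l : nat) (M N : 'I_t -> 'I_t -> 'M[F]_l) :
  (forall i k, \sum_j M i j *m N j k = if i == k then 1%:M else 0) ->
  \mxblock_(a < t, b < t) M a b \in unitmx.
Proof.
move=> MN; suff : \mxblock_(a < t, b < t) M a b *m \mxblock_(a < t, b < t) N a b = 1%:M.
  by case/mulmx1_unit.
rewrite mul_mxblock -[RHS](@mxdiagZ _ t (fun=> l)) /mxdiag; apply: eq_mxblock => i k.
by rewrite MN; case: eqP => // _; rewrite conform_mx_id.
Qed.

Lemma ltn_homo_ord_inj (t n : nat) (h : 'I_t -> 'I_n) :
  {homo h : x y / (x < y)%N} -> injective h.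
Proof.
move=> hh x y Exy; apply/val_inj.
by case: (ltngtP x y) => // /hh; rewrite Exy ltnn.
Qed.

Lemma ltn_homo_ord2_id (h : 'I_2 -> 'I_2) :
  {homo h : x y / (x < y)%N} -> h =1 id.
Proof.
move=> hh; have h01 := hh ord0 ord_max isT; have h1lt := ltn_ord (h ord_max).
have h0 : h ord0 = ord0 by apply/val_inj => /=; lia.
have h1 : h ord_max = ord_max by apply/val_inj => /=; lia.
case=> [[|[|//]] p].
  by rewrite (_ : Ordinal p = ord0) //; apply/val_inj.
by rewrite (_ : Ordinal p = ord_max) //; apply/val_inj.
Qed.

Lemma fam2_pow_unit (F : fieldType) (l : nat) (A0 A1 : 'M[F]_l) (i j : 'I_2) :
  A0 \in unitmx -> A1 \in unitmx -> fam2 A0 A1 i ^+ j \in unitmx.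
Proof.
move=> U0 U1; case: i j => [[|[|//]] ?] [[|[|//]] ?];
  by rewrite /fam2 /= ?expr0 ?expr1 ?unitmx1.
Qed.

(* The only nontrivial block submatrix is [[1, A0], [1, A1]], whose inverse is
   [[A1 E, - A0 E], [- E, E]] with [E = (A1 - A0)^-1]. *)
Lemma fam2_mxblock_unit (F : fieldType) (l : nat) (A0 A1 : 'M[F]_l) :
  A0 \in unitmx -> A1 \in unitmx -> A1 - A0 \in unitmx ->
  forall (t : nat) (f : 'I_t -> 'I_2) (g : 'I_t -> 'I_2),
    {homo f : x y / (x < y)%N} -> {homo g : x y / (x < y)%N} ->
    \mxblock_(a < t, b < t) (fam2 A0 A1 (f a) ^+ (g b)) \in unitmx.
Proof.
move=> U0 U1 UD t f g hf hg.
have : (t <= 2)%N by have := @leq_card _ _ f (ltn_homo_ord_inj hf); rewrite !card_ord.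
case: t f g hf hg => [|[|[|//]]] f g hf hg _.
- by apply: (@mxblock_unit_of_rinv _ _ _ _ (fun _ _ => 0)) => [[]].
- apply: (@mxblock_unit_of_rinv _ _ _ _
    (fun _ _ => invmx (fam2 A0 A1 (f ord0) ^+ g ord0))) => i k.
  by rewrite big_ord1 !ord1 eqxx mulmxV ?fam2_pow_unit.
have fE := ltn_homo_ord2_id hf; have gE := ltn_homo_ord2_id hg.
have DE : (A1 - A0) *m invmx (A1 - A0) = 1%:M by rewrite mulmxV.
move: (invmx (A1 - A0)) DE => E DE.
apply: (@mxblock_unit_of_rinv _ _ _ _ (fun j k =>
  if val j == 0%N then (if val k == 0%N then A1 *m E else - (A0 *m E))
  else (if val k == 0%N then - E else E))) => i k.
rewrite !big_ord_recl big_ord0 addr0 !fE !gE.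
case: i k => [[|[|//]] ?] [[|[|//]] ?]; rewrite /fam2 /= ?expr0 ?expr1 ?mul1mx.
- by rewrite mulmxN -mulmxBl DE.
- by rewrite addNr.
- by rewrite mulmxN subrr.
- by rewrite addrC -mulmxBl DE.
Qed.

Lemma submx_mulmx_scaled (F : fieldType) (m n : nat) (B : 'M[F]_(m, n))
    (A : 'M[F]_n) (u v : 'rV[F]_n) (c : F) :
  c != 0 -> (u <= B)%MS -> u *m A = c *: v -> (v <= B *m A)%MS.
Proof. by move=> c0 uB uA; rewrite -(eqmx_scale _ c0) -uA submxMr. Qed.

Lemma submx_unit_scaled (F : fieldType) (n : nat) (A : 'M[F]_n)
    (u v : 'rV[F]_n) (c : F) :
  c != 0 -> u *m A = c *: v -> (v <= A)%MS.
Proof. by move=> c0 uA; rewrite -[A]mul1mx (submx_mulmx_scaled c0 (submx1 u)). Qed.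

Lemma sum_pow2_eqmx1 (F : fieldType) (l : nat) (S A : 'M[F]_l) :
  row_full (S + S *m A)%MS -> (\sum_(j < 2) (S *m A ^+ j) == 1%:M)%MS.
Proof.
rewrite !big_ord_recl big_ord0 /bump /= expr0 expr1 mulmx1 addsmx0_id => full.
by apply/andP; rewrite submx1 sub1mx.
Qed.

Lemma half_index_bounds (l i : nat) :
  (i < l./2)%N -> (i.*2 < l)%N /\ (i.*2.+1 < l)%N.
Proof. by rewrite gtn_half_double => Hi1; split=> //; apply: ltnW. Qed.

Lemma ltn_half (l i : nat) : (i < l./2)%N -> (i < l)%N.
Proof. by case/half_index_bounds => Hi0 _; apply: leq_ltn_trans Hi0; rewrite -addnn leq_addr. Qed.

Section ColoredMatching.

Variables (F : fieldType) (l : nat) (lam : F) (z z' : seq 'I_l).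
Hypotheses (l4 : (4 %| l)%N) (lam0 : lam != 0)
  (zz' : perfect_colored_matching z z').

Local Notation c i := (Amat_coef l lam i).
Local Notation e s i := (unitv_at F s i).

Let coef_neq0 i : c i != 0 := Amat_coef_neq0 l i lam0.

Lemma pcm_row_full (m : nat) (M : 'M[F]_(m, l)) :
  (forall i, (i < l./2)%N -> (e z i <= M)%MS /\ (e z' i <= M)%MS) ->
  row_full M.
Proof.
have [sz sz' _ cover] := zz'; move=> HM; rewrite -sub1mx.
apply/row_subP => k; rewrite row1.
case/orP: (cover k) => Hk.
  by rewrite -(unitv_at_index F Hk); apply: (HM _ _).1; rewrite -sz index_mem.
by rewrite -(unitv_at_index F Hk); apply: (HM _ _).2; rewrite -sz' index_mem.
Qed.

Lemma PZ_unit : PZ F z z' \in unitmx.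
Proof.
rewrite -row_full_unit; apply: pcm_row_full => i /half_index_bounds[Hi0 Hi1].
have ze := row_sub (Ordinal Hi0) (PZ F z z'); rewrite row_PZ_even in ze.
have zo := row_sub (Ordinal Hi1) (PZ F z z'); rewrite row_PZ_odd in zo.
by split; rewrite // -(subrK (e z i) (e z' i)) addmx_sub.
Qed.

Lemma PZ'_unit : PZ' F z z' \in unitmx.
Proof.
rewrite -row_full_unit; apply: pcm_row_full => i /half_index_bounds[Hi0 Hi1].
have ze := row_sub (Ordinal Hi0) (PZ' F z z'); rewrite row_PZ'_even in ze.
have zo := row_sub (Ordinal Hi1) (PZ' F z z'); rewrite row_PZ'_odd in zo.
by split; rewrite // -(addrK (e z' i) (e z i)) addmx_sub // -scaleN1r scalemx_sub.
Qed.

Lemma unitv_mul_AZ i : (i < l./2)%N ->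
  e z i *m AZ lam z z' = c i *: (e z' i - e z i) /\
  e z' i *m AZ lam z z' = c i *: e z' i.
Proof.
case/half_index_bounds=> Hi0 Hi1.
have [] := row_conj_Amat lam l4 Hi0 Hi1 PZ_unit.
rewrite row_PZ_even row_PZ_odd => Ke Ko; split=> //.
by rewrite -{1}(subrK (e z i) (e z' i)) mulmxDl /AZ Ko Ke -scalerDr addrC subrK.
Qed.

Lemma unitv_mul_AZ' i : (i < l./2)%N ->
  e z' i *m AZ' lam z z' = c i *: (e z i + e z' i) /\
  e z i *m AZ' lam z z' = - c i *: e z i.
Proof.
case/half_index_bounds=> Hi0 Hi1.
have [] := row_conj_Amat lam l4 Hi0 Hi1 PZ'_unit.
rewrite row_PZ'_even row_PZ'_odd => Ke Ko; split=> //.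
rewrite -{1}(addrK (e z' i) (e z i)) mulmxBl /AZ' Ko Ke.
by rewrite scalerDr opprD addrCA subrr addr0 scaleNr.
Qed.

Lemma AZ_unit : AZ lam z z' \in unitmx.
Proof.
rewrite -row_full_unit; apply: pcm_row_full => i Hi.
have [Ke Ko] := unitv_mul_AZ Hi.
have Hz' := submx_unit_scaled (coef_neq0 i) Ko.
have Hd := submx_unit_scaled (coef_neq0 i) Ke.
by split; rewrite // -(subKr (e z' i) (e z i)) addmx_sub // -scaleN1r scalemx_sub.
Qed.

Lemma AZ'_unit : AZ' lam z z' \in unitmx.
Proof.
rewrite -row_full_unit; apply: pcm_row_full => i Hi.
have [Ko Ke] := unitv_mul_AZ' Hi.
have Hz : (e z i <= AZ' lam z z')%MS.
  by apply: submx_unit_scaled Ke; rewrite oppr_eq0.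
have Hs := submx_unit_scaled (coef_neq0 i) Ko.
by split; rewrite // -(addKr (e z i) (e z' i)) addmx_sub // -scaleN1r scalemx_sub.
Qed.

Lemma AZ'_sub_AZ_unit : AZ' lam z z' - AZ lam z z' \in unitmx.
Proof.
rewrite -row_full_unit; apply: pcm_row_full => i Hi.
have [Ke Ko] := unitv_mul_AZ Hi; have [Ko' Ke'] := unitv_mul_AZ' Hi.
split.
  apply: (@submx_unit_scaled _ _ _ (e z' i) _ (c i)) => //.
  by rewrite mulmxBr Ko' Ko scalerDr addrK.
apply: (@submx_unit_scaled _ _ _ (e z i) _ (- c i)); first by rewrite oppr_eq0.
by rewrite mulmxBr Ke' Ke scalerBr opprB !scaleNr addKr.
Qed.

Lemma Sspan_rank : \rank (Sspan F z) = l./2 /\ \rank (Sspan F z') = l./2.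
Proof.
have [sz sz' _ _] := zz'.
have full : row_full (Sspan F z + Sspan F z')%MS.
  apply: pcm_row_full => i Hi; have il := ltn_half Hi.
  by rewrite !(submx_trans (Sspan_sub F _ il)) ?addsmxSl ?addsmxSr.
have [+ _] := mxrank_adds_leqif (Sspan F z) (Sspan F z'); rewrite (eqP full).
have := @Sspan_rank_le F l z; have := @Sspan_rank_le F l z'.
rewrite sz sz'; clear -l4; lia.
Qed.

Lemma Sspan_AZ_full : row_full (Sspan F z + Sspan F z *m AZ lam z z')%MS.
Proof.
apply: pcm_row_full => i Hi; have il := ltn_half Hi.
have [Ke _] := unitv_mul_AZ Hi.
have HS := submx_trans (Sspan_sub F z il) (addsmxSl _ (Sspan F z *m AZ lam z z')).
have HSA := submx_mulmx_scaled (coef_neq0 i) (Sspan_sub F z il) Ke.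
by split; rewrite // -(subrK (e z i) (e z' i)) addmx_sub // (submx_trans HSA) ?addsmxSr.
Qed.

Lemma Sspan_AZ'_full : row_full (Sspan F z' + Sspan F z' *m AZ' lam z z')%MS.
Proof.
apply: pcm_row_full => i Hi; have il := ltn_half Hi.
have [Ko _] := unitv_mul_AZ' Hi.
have HS := submx_trans (Sspan_sub F z' il) (addsmxSl _ (Sspan F z' *m AZ' lam z z')).
have HSA := submx_mulmx_scaled (coef_neq0 i) (Sspan_sub F z' il) Ko.
split; rewrite // -(addrK (e z' i) (e z i)) addmx_sub ?(submx_trans HSA) ?addsmxSr //.
by rewrite -scaleN1r scalemx_sub.
Qed.

Lemma Sspan_z_AZ'_eqmx : (Sspan F z *m AZ' lam z z' == Sspan F z)%MS.
Proof.
have [sz _ _ _] := zz'; apply: eqmx_mul_unit AZ'_unit _.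
by apply: (@Sspan_mulmx_sub _ _ _ _ (fun i => - c i)) => i; rewrite sz => /unitv_mul_AZ'[].
Qed.

Lemma Sspan_z'_AZ_eqmx : (Sspan F z' *m AZ lam z z' == Sspan F z')%MS.
Proof.
have [_ sz' _ _] := zz'; apply: eqmx_mul_unit AZ_unit _.
by apply: (@Sspan_mulmx_sub _ _ _ _ (fun i => c i)) => i; rewrite sz' => /unitv_mul_AZ[].
Qed.

End ColoredMatching.

Theorem lemma4p4 (F : finFieldType) (l : nat) (lam : F) (z z' : seq 'I_l) :
  (4 %| l)%N -> lam != 0 -> perfect_colored_matching z z' ->
  subspace_condition 2%N
    (fam2 (AZ lam z z') (AZ' lam z z'))
    (fam2 (Sspan F z) (Sspan F z')).
Proof.
move=> l4 lam0 zz'.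
have UZ := AZ_unit l4 lam0 zz'; have UZ' := AZ'_unit l4 lam0 zz'.
have [rk rk'] := Sspan_rank F l4 zz'.
split=> [[[|[|//]] ?]|[[|[|//]] ?]|[[|[|//]] ?]|[[|[|//]] ?] [[|[|//]] ?] //= _|];
  rewrite /fam2 /= ?divn2 //.
- exact: sum_pow2_eqmx1 (Sspan_AZ_full l4 lam0 zz').
- exact: sum_pow2_eqmx1 (Sspan_AZ'_full l4 lam0 zz').
- exact: Sspan_z_AZ'_eqmx l4 lam0 zz'.
- exact: Sspan_z'_AZ_eqmx l4 lam0 zz'.
- exact: fam2_mxblock_unit (AZ'_sub_AZ_unit l4 lam0 zz').
Qed.
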